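(* Let $i,m\in\mathbb{N}$ with $i\ge1$, let $v\in\mathbb{R}^i$ and $\omega_0\in\mathbb{R}^n$. Then either there exists $k_0\ge i$ such that $CB^mQ_i^k(v)\omega_0\neq0$ for all $k\ge k_0$, or $CB^mQ_i^k(v)\omega_0=0$ for all $k\ge i$.
   Context: Let $n\ge1$, $A,B\in\mathrm{End}(\mathbb{R}^n)$, $C\in\mathcal{L}(\mathbb{R}^n,\mathbb{R})$. Polynomials have commuting scalar indeterminates $X_0,X_1,\dots$ and coefficients in $\mathrm{End}(\mathbb{R}^n)$. Define the linear map $\Psi$ by $\Psi(P)(X_0,\dots,X_k)=P(X_0,\dots,X_{k-1})(A+X_0B)+\sum_{i=0}^{k-1}\frac{\partial P}{\partial X_i}(X_0,\dots,X_{k-1})X_{i+1}$, where $k$ is the least $\ell$ such that $P$ involves only $X_0,\dots,X_{\ell-1}$. Let $P_0=I$, $P_{k+1}=\Psi(P_k)$, and for $1\le i\le k$ let $Q_i^k=\partial P_k/\partial X_{k-i}$. Each $Q_i^k$ ($k\ge i$) is a polynomial in $X_0,\dots,X_{i-1}$ only, and $Q_i^k(v)$ denotes its evaluation at $(X_0,\dots,X_{i-1})=v$. *)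

From mathcomp Require Import all_boot all_algebra.
From mathcomp Require Import reals.
Set Implicit Arguments. Unset Strict Implicit. Unset Printing Implicit Defensive.
Import GRing.Theory.
Local Open Scope ring_scope.

(* Polynomials in the commuting scalar indeterminates X_0, X_1, ... with
   coefficients in End(R^n) = 'M[R]_n, represented as formal finite sums of
   terms (c, s) meaning  c * X_0^(s_0) X_1^(s_1) ...  (s : seq nat, missing
   exponents are 0).  All operations below are defined termwise and are
   compatible with the polynomial they represent; the statement only uses
   evaluations, which do not depend on the representative. *)

Section Polys.
Variables (R : realType) (n : nat).

Definition mono := seq nat.
Definition mpol := seq ('M[R]_n * mono).

(* P(X) * (A + X_0 B) *)
Definition mulAB (A B : 'M[R]_n) (P : mpol) : mpol :=
  flatten [seq [:: (t.1 *m A, t.2); (t.1 *m B, incr_nth t.2 0)] | t <- P].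

Definition pderiv (j : nat) (P : mpol) : mpol :=
  [seq ((nth 0%N t.2 j)%:R *: t.1, set_nth 0%N t.2 j (nth 0%N t.2 j).-1)
  | t <- P & nth 0%N t.2 j != 0%N].

Definition mulX (j : nat) (P : mpol) : mpol :=
  [seq (t.1, incr_nth t.2 j) | t <- P].

(* Psi(P) = P (A + X_0 B) + sum_{i<k} dP/dX_i * X_{i+1}, with k given
   (P involves only X_0..X_{k-1}) *)
Definition Psi (A B : 'M[R]_n) (k : nat) (P : mpol) : mpol :=
  mulAB A B P ++ flatten [seq mulX j.+1 (pderiv j P) | j <- iota 0 k].

Fixpoint Pk (A B : 'M[R]_n) (k : nat) : mpol :=
  if k is k'.+1 then Psi A B k' (Pk A B k') else [:: (1%:M, [::])].

Definition Qik (A B : 'M[R]_n) (i k : nat) : mpol := pderiv (k - i) (Pk A B k).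

Definition mono_eval (e : nat -> R) (s : mono) : R :=
  \prod_(j < size s) e j ^+ nth 0%N s j.

Definition peval (e : nat -> R) (P : mpol) : 'M[R]_n :=
  \sum_(t <- P) mono_eval e t.2 *: t.1.

(* valuation X_j := v_j for j < i (and 0 for j >= i, irrelevant for Q_i^k) *)
Definition env_of (i : nat) (v : 'rV[R]_i) (j : nat) : R :=
  match (insub j : option 'I_i) with Some l => v ord0 l | None => 0 end.

Definition mxpow (B : 'M[R]_n) (m : nat) : 'M[R]_n := iter m (mulmx B) 1%:M.

End Polys.

From mathcomp Require Import all_boot all_order all_algebra.
From mathcomp Require Import reals.
From Stdlib Require Import Classical_Prop.
Set Implicit Arguments. Unset Strict Implicit. Unset Printing Implicit Defensive.
Import Order.TTheory GRing.Theory Num.Theory.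
Local Open Scope ring_scope.

(* Differentiating P_(k+1) = Psi_k(P_k) with respect to X_(k-i) gives
   Q_(i+1)^(k+1) = Psi_k(Q_i^k) + Q_(i+1)^k: the finite difference in k of
   Q_(i+1)^k is Psi_k(Q_i^k).  As Q_i^k involves only X_0, ..., X_(i-1), the
   operator Psi_k acts on it as Psi_i, independently of k; hence the i-th finite
   difference of k |-> Q_i^(k+i) is Psi_i^i applied to Q_0 = 0.  So the real
   sequence k |-> C B^m Q_i^k(v) w0 has vanishing i-th difference, i.e. it is a
   polynomial in k, and such a sequence is either identically zero or of
   constant sign from some index on.
   Equality of polynomials is equality of the coefficient functions [mcoef],
   since a list of terms is not a canonical representative. *)

Definition fdiff {V : zmodType} (g : nat -> V) k := g k.+1 - g k.

Lemma iter_fdiff_morph (V W : zmodType) (phi : V -> W) :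
  {morph phi : x y / x - y} ->
  forall d g k, phi (iter d fdiff g k) = iter d fdiff (phi \o g) k.
Proof.
by move=> phiB; elim=> [|d IH] g k //=; rewrite /fdiff phiB !IH.
Qed.

Definition eventually (P : nat -> Prop) := exists K, forall k, (K <= k)%N -> P k.

Section EventualSign.
Variable R : realDomainType.

Lemma increasing_eventually_sign (h : nat -> R) :
  eventually (fun k => h k < h k.+1) ->
  eventually (fun k => 0 < h k) \/ eventually (fun k => h k < 0).
Proof.
move=> [K hK].
have h_mono k d : (K <= k)%N -> h k <= h (d + k).
  move=> Kk; elim: d => [|d IHd] //.
  exact: le_trans IHd (ltW (hK _ (leq_trans Kk (leq_addl _ _)))).
case: (classic (exists k, (K <= k)%N /\ 0 < h k)) => [[k [Kk hk]]|no_pos].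
  left; exists k => l kl; rewrite -(subnK kl).
  exact: lt_le_trans hk (h_mono _ _ Kk).
right; exists K => k Kk; apply: lt_le_trans (hK k Kk) _.
rewrite leNgt; apply/negP => hk; apply: no_pos.
by exists k.+1; split; first exact: leqW.
Qed.

Lemma iter_fdiff_eq0_sign d (g : nat -> R) : (forall k, iter d fdiff g k = 0) ->
  (forall k, g k = 0) \/
  eventually (fun k => 0 < g k) \/ eventually (fun k => g k < 0).
Proof.
elim: d g => [|d IH] g gd0; first by left.
have dg0 k : iter d fdiff (fdiff g) k = 0 by rewrite -iterSr.
have [dg_eq0|[[K dg_gt0]|[K dg_lt0]]] := IH _ dg0.
- have gE k : g k = g 0%N.
    by elim: k => // k <-; apply/eqP; rewrite -subr_eq0 -/(fdiff g k) dg_eq0.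
  case: (ltgtP (g 0%N) 0) => g0; [right; right | right; left | left];
    try exists 0%N; by move=> k; rewrite gE.
- right; apply: increasing_eventually_sign.
  by exists K => k /dg_gt0; rewrite subr_gt0.
- have ngN : eventually (fun k => - g k < - g k.+1).
    by exists K => k /dg_lt0; rewrite subr_lt0 ltrN2.
  have [[K' hK']|[K' hK']] := increasing_eventually_sign ngN.
  + by right; right; exists K' => k /hK'; rewrite oppr_gt0.
  + by right; left; exists K' => k /hK'; rewrite oppr_lt0.
Qed.

Lemma iter_fdiff_eq0_dichotomy d (g : nat -> R) : (forall k, iter d fdiff g k = 0) ->
  (forall k, g k = 0) \/ eventually (fun k => g k != 0).
Proof.
move=> /iter_fdiff_eq0_sign[g0|[[K gK]|[K gK]]]; [by left | right..].
- by exists K => k /gK /lt0r_neq0.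
- by exists K => k /gK /ltr0_neq0.
Qed.

End EventualSign.

Section FormalPolynomials.
Variables (R : realType) (n : nat).
Local Notation M := 'M[R]_n.
Local Notation mp := (mpol R n).

Definition mono_eq (s s' : mono) : bool :=
  all (fun j => nth 0%N s j == nth 0%N s' j) (iota 0 (maxn (size s) (size s'))).

Lemma mono_eqP s s' : reflect (forall j, nth 0%N s j = nth 0%N s' j) (mono_eq s s').
Proof.
apply: (iffP allP) => [eq_ss' j | eq_ss' j _]; last exact/eqP.
case: (ltnP j (maxn (size s) (size s'))) => [lt_j|].
  by apply/eqP/eq_ss'; rewrite mem_iota.
by rewrite geq_max => /andP[s_j s'_j]; rewrite !nth_default.
Qed.

Lemma mono_eq_refl s : mono_eq s s. Proof. exact/mono_eqP. Qed.

Lemma mono_eq_sym s s' : mono_eq s s' = mono_eq s' s.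
Proof. by apply/mono_eqP/mono_eqP => eq_ss' j. Qed.

Lemma mono_eq_trans s1 s2 s3 : mono_eq s1 s2 -> mono_eq s2 s3 -> mono_eq s1 s3.
Proof. by move=> /mono_eqP e12 /mono_eqP e23; apply/mono_eqP => j; rewrite e12. Qed.

Definition decr_nth (s : mono) j := set_nth 0%N s j (nth 0%N s j).-1.

Lemma nth_decr_nth s j l :
  nth 0%N (decr_nth s j) l = if l == j then (nth 0%N s j).-1 else nth 0%N s l.
Proof. exact: nth_set_nth. Qed.

Lemma mono_eq_incr_nth t s j :
  mono_eq (incr_nth t j) s = (nth 0%N s j != 0%N) && mono_eq t (decr_nth s j).
Proof.
apply/mono_eqP/andP => [e | [s_j /mono_eqP e] l].
  split; first by rewrite -e nth_incr_nth eqxx.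
  apply/mono_eqP => l; rewrite nth_decr_nth.
  case: eqP => [->|/eqP ne]; rewrite -e nth_incr_nth; first by rewrite eqxx.
  by rewrite eq_sym (negbTE ne).
rewrite nth_incr_nth e nth_decr_nth eq_sym.
by case: eqP => [->|//]; rewrite add1n prednK ?lt0n.
Qed.

Lemma mono_eq_decr_nth t s j : nth 0%N t j != 0%N ->
  mono_eq (decr_nth t j) s = mono_eq t (incr_nth s j).
Proof. by move=> t_j; rewrite mono_eq_sym [RHS]mono_eq_sym mono_eq_incr_nth t_j. Qed.

Definition mcoef (P : mp) (s : mono) : M := \sum_(t <- P | mono_eq t.2 s) t.1.

Local Notation "P =m Q" := (mcoef P =1 mcoef Q) (at level 70, no associativity).

Definition oppmp (P : mp) : mp := [seq (- t.1, t.2) | t <- P].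

Lemma mcoef_nil s : mcoef [::] s = 0. Proof. exact: big_nil. Qed.

Lemma mcoef_cons t P s :
  mcoef (t :: P) s = (if mono_eq t.2 s then t.1 else 0) + mcoef P s.
Proof. by rewrite /mcoef big_cons; case: ifP; rewrite ?add0r. Qed.

Lemma mcoef_cat P Q s : mcoef (P ++ Q) s = mcoef P s + mcoef Q s.
Proof. exact: big_cat. Qed.

Lemma mcoef_flatten (F : nat -> mp) l s :
  mcoef (flatten [seq F j | j <- l]) s = \sum_(j <- l) mcoef (F j) s.
Proof. by rewrite /mcoef big_flatten big_map. Qed.

Lemma mcoef_oppmp P s : mcoef (oppmp P) s = - mcoef P s.
Proof. by rewrite /mcoef big_map sumrN. Qed.

Lemma mcoef_mono_eq P s s' : mono_eq s s' -> mcoef P s = mcoef P s'.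
Proof.
move=> ss'; apply: eq_bigl => t; apply/idP/idP => [/mono_eq_trans|]; first exact.
by move/mono_eq_trans; apply; rewrite mono_eq_sym.
Qed.

Lemma mcoef_mulX j P s :
  mcoef (mulX j P) s = if nth 0%N s j != 0%N then mcoef P (decr_nth s j) else 0.
Proof.
rewrite /mcoef big_map (eq_bigl _ _ (fun t => mono_eq_incr_nth t.2 s j)).
by case: ifP => _; last rewrite big_pred0.
Qed.

Lemma mcoef_pderiv j P s :
  mcoef (pderiv j P) s = (nth 0%N s j).+1%:R *: mcoef P (incr_nth s j).
Proof.
rewrite /mcoef /pderiv big_map big_filter_cond scaler_sumr.
apply: eq_big => [t|t /andP[t_j]].
  case t_j: (nth 0%N t.2 j != 0%N).
    by rewrite -/(decr_nth _ _) mono_eq_decr_nth.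
  apply/esym/negbTE/mono_eqP => e.
  by move: t_j; rewrite e nth_incr_nth eqxx.
by rewrite -/(decr_nth _ _) mono_eq_decr_nth // => /mono_eqP ->; rewrite nth_incr_nth eqxx.
Qed.

Lemma mcoef_mulAB A B P s :
  mcoef (mulAB A B P) s =
  mcoef P s *m A + (if nth 0%N s 0 != 0%N then mcoef P (decr_nth s 0) *m B else 0).
Proof.
elim: P => [|t P IH].
  by rewrite /= !mcoef_nil mul0mx add0r; case: ifP; rewrite ?mul0mx.
rewrite /mulAB /= -/(mulAB A B P) !mcoef_cons IH mono_eq_incr_nth !mulmxDl.
case: (mono_eq t.2 s); case: (nth 0%N s 0 != 0%N); case: (mono_eq t.2 (decr_nth s 0));
  rewrite /= ?mul0mx ?add0r ?addr0 ?addrA //.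
- by rewrite (addrAC (t.1 *m A)).
- by rewrite (addrC (t.1 *m B)).
Qed.

Lemma mcoef_Psi A B K P s :
  mcoef (Psi A B K P) s =
  mcoef (mulAB A B P) s + \sum_(j <- iota 0 K) mcoef (mulX j.+1 (pderiv j P)) s.
Proof. by rewrite mcoef_cat mcoef_flatten. Qed.

Lemma pderiv_eqmp j P Q : P =m Q -> pderiv j P =m pderiv j Q.
Proof. by move=> PQ s; rewrite !mcoef_pderiv PQ. Qed.

Lemma mulX_eqmp j P Q : P =m Q -> mulX j P =m mulX j Q.
Proof. by move=> PQ s; rewrite !mcoef_mulX PQ. Qed.

Lemma Psi_eqmp A B K P Q : P =m Q -> Psi A B K P =m Psi A B K Q.
Proof.
move=> PQ s; rewrite !mcoef_Psi !mcoef_mulAB !PQ.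
by congr (_ + _); apply: eq_bigr => j _; apply/mulX_eqmp/pderiv_eqmp.
Qed.

Lemma Psi_nil A B K : Psi A B K [::] =m [::].
Proof. by move=> s; rewrite mcoef_Psi big1 => [|j _]; rewrite /= mcoef_nil ?addr0. Qed.

Lemma pderiv_cat j (P Q : mp) : pderiv j (P ++ Q) = pderiv j P ++ pderiv j Q.
Proof. by rewrite /pderiv filter_cat map_cat. Qed.

Lemma mulX_cat j (P Q : mp) : mulX j (P ++ Q) = mulX j P ++ mulX j Q.
Proof. exact: map_cat. Qed.

Lemma Psi_cat A B K P Q : Psi A B K (P ++ Q) =m Psi A B K P ++ Psi A B K Q.
Proof.
move=> s; rewrite mcoef_cat !mcoef_Psi addrACA.
congr (_ + _); first by rewrite /mulAB map_cat flatten_cat mcoef_cat.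
rewrite -big_split; apply: eq_bigr => j _ /=.
by rewrite pderiv_cat mulX_cat mcoef_cat.
Qed.

Lemma Psi_oppmp A B K P : Psi A B K (oppmp P) =m oppmp (Psi A B K P).
Proof.
move=> s; rewrite mcoef_oppmp !mcoef_Psi opprD; congr (_ + _).
  rewrite !mcoef_mulAB !mcoef_oppmp opprD mulNmx.
  by case: ifP; rewrite ?mcoef_oppmp ?mulNmx ?oppr0.
rewrite -sumrN; apply: eq_bigr => j _; rewrite !mcoef_mulX.
case: ifP; rewrite ?oppr0 // => _.
by rewrite !mcoef_pderiv mcoef_oppmp scalerN.
Qed.

Lemma pderiv_comm j l P : pderiv j (pderiv l P) =m pderiv l (pderiv j P).
Proof.
move=> s; have [->|ne_jl] := eqVneq j l; first by [].
rewrite !mcoef_pderiv !nth_incr_nth (negbTE ne_jl) eq_sym (negbTE ne_jl).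
rewrite !scalerA mulrC.
by congr (_ *: _); apply/mcoef_mono_eq/mono_eqP => i; rewrite !nth_incr_nth addnCA.
Qed.

Lemma pderivS_mulAB A B j P : pderiv j.+1 (mulAB A B P) =m mulAB A B (pderiv j.+1 P).
Proof.
move=> s; rewrite mcoef_pderiv !mcoef_mulAB !mcoef_pderiv scalerDr scalemxAl nth_incr_nth.
congr (_ + _); case: ifP => _; last by rewrite scaler0.
rewrite scalemxAl nth_decr_nth; congr (_ *: _ *m _).
by apply/mcoef_mono_eq/mono_eqP => l; rewrite !(nth_decr_nth, nth_incr_nth); case: l.
Qed.

Lemma pderiv_mulX j l P :
  pderiv j (mulX l P) =m mulX l (pderiv j P) ++ (if j == l then P else [::]).
Proof.
move=> s; rewrite mcoef_cat mcoef_pderiv !mcoef_mulX nth_incr_nth.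
have [<-|ne_jl] := eqVneq j l; last first.
  rewrite add0n mcoef_nil addr0; case: ifP => _; last by rewrite scaler0.
  rewrite mcoef_pderiv nth_decr_nth (negbTE ne_jl); congr (_ *: _).
  apply/mcoef_mono_eq/mono_eqP => i; rewrite !(nth_decr_nth, nth_incr_nth).
  by case: (eqVneq i l) => [->|]; rewrite ?(negbTE ne_jl).
have decr_incr : mono_eq (decr_nth (incr_nth s j) j) s.
  by rewrite mono_eq_decr_nth ?mono_eq_refl // nth_incr_nth eqxx.
rewrite add1n /= (mcoef_mono_eq _ decr_incr).
case: ifP => [s_j|/negbFE/eqP s_j]; last by rewrite s_j add0r scale1r.
have incr_decr : mono_eq (incr_nth (decr_nth s j) j) s.
  by rewrite mono_eq_incr_nth s_j mono_eq_refl.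
rewrite mcoef_pderiv nth_decr_nth eqxx (mcoef_mono_eq _ incr_decr) prednK ?lt0n //.
by rewrite -[X in _ = _ + X]scale1r -scalerDl -natr1.
Qed.

Lemma pderivS_Psi A B K j P :
  pderiv j.+1 (Psi A B K P) =m
  Psi A B K (pderiv j.+1 P) ++ (if (j < K)%N then pderiv j P else [::]).
Proof.
move=> s; rewrite mcoef_cat mcoef_pderiv !mcoef_Psi scalerDr -mcoef_pderiv.
rewrite pderivS_mulAB -addrA scaler_sumr; congr (_ + _).
under eq_bigr => l _ do rewrite -mcoef_pderiv pderiv_mulX mcoef_cat
  (mulX_eqmp _ (pderiv_comm _ _ _)) eqSS.
rewrite big_split /=; congr (_ + _).
rewrite (eq_bigr (fun i => if i == j then mcoef (pderiv j P) s else 0)); last first.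
  by move=> i _; rewrite eq_sym; case: eqP => [->|_]; rewrite ?mcoef_nil.
rewrite -big_mkcond -(subn0 K) big_nat1_eq subn0.
by case: (j < K)%N; rewrite ?mcoef_nil.
Qed.

Definition vars_lt L (P : mp) := forall j, (L <= j)%N -> pderiv j P =m [::].

Lemma vars_lt_eqmp L P Q : P =m Q -> vars_lt L P -> vars_lt L Q.
Proof. by move=> PQ PL j Lj s; rewrite -(pderiv_eqmp j PQ s) (PL j Lj s). Qed.

Lemma vars_lt_cat L P Q : vars_lt L P -> vars_lt L Q -> vars_lt L (P ++ Q).
Proof.
by move=> PL QL j Lj s; rewrite pderiv_cat mcoef_cat PL // QL // !mcoef_nil addr0.
Qed.

Lemma vars_lt_pderiv L l P : vars_lt L P -> vars_lt L (pderiv l P).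
Proof.
by move=> PL j Lj s; rewrite pderiv_comm mcoef_pderiv PL // !mcoef_nil scaler0.
Qed.

Lemma vars_lt_Psi A B K L P : vars_lt L P -> vars_lt L.+1 (Psi A B K P).
Proof.
move=> PL [//|j] Lj s; rewrite pderivS_Psi mcoef_cat.
rewrite (Psi_eqmp _ _ _ (PL _ (leqW Lj))) Psi_nil mcoef_nil add0r.
by case: ifP; rewrite ?PL ?mcoef_nil.
Qed.

Lemma Psi_vars_lt A B K L P :
  vars_lt L P -> (L <= K)%N -> Psi A B K P =m Psi A B L P.
Proof.
move=> PL LK s; rewrite !mcoef_Psi; congr (_ + _).
rewrite -(subnKC LK) iotaD big_cat /= add0n.
rewrite [X in _ + X]big1_seq ?addr0 // => j; rewrite mem_iota => /andP[_ /andP[Lj _]].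
by rewrite mcoef_mulX PL // mcoef_nil; case: ifP.
Qed.

Lemma vars_lt_Pk A B k : vars_lt k (Pk A B k).
Proof.
by elim: k => [|k IH]; [move=> j _ s; rewrite /pderiv /= nth_nil | apply: vars_lt_Psi].
Qed.

Lemma Qik0 A B k : Qik A B 0 k =m [::].
Proof. by rewrite /Qik subn0; apply: vars_lt_Pk. Qed.

Lemma QikS A B i k : (i < k)%N ->
  Qik A B i.+1 k.+1 =m Psi A B k (Qik A B i k) ++ Qik A B i.+1 k.
Proof.
move=> ik s; rewrite /Qik subSS -(subnSK ik) [Pk A B k.+1]/=.
by rewrite pderivS_Psi subnSK // leq_subr.
Qed.

Lemma vars_lt_Qik A B i k : (i <= k)%N -> vars_lt i (Qik A B i k).
Proof.
elim: i k => [|i IH] k ik.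
  by apply: vars_lt_eqmp (fsym (Qik0 A B k)) _ => j _ s.
rewrite -(subnK ik); elim: (k - i.+1)%N => [|d IHd].
  by rewrite /Qik subnn; apply/vars_lt_pderiv/vars_lt_Pk.
have i_lt : (i < d + i.+1)%N by rewrite addnS ltnS leq_addl.
rewrite addSn; apply: vars_lt_eqmp (fsym (QikS A B i_lt)) _.
exact/vars_lt_cat/IHd/vars_lt_Psi/IH/ltnW.
Qed.

Definition mpdiff (f : nat -> mp) k : mp := f k.+1 ++ oppmp (f k).

Lemma mcoef_mpdiff f k s : mcoef (mpdiff f k) s = mcoef (f k.+1) s - mcoef (f k) s.
Proof. by rewrite mcoef_cat mcoef_oppmp. Qed.

Lemma Psi_mpdiff A B K f k :
  Psi A B K (mpdiff f k) =m mpdiff (fun k => Psi A B K (f k)) k.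
Proof. by move=> s; rewrite Psi_cat mcoef_cat [RHS]mcoef_cat Psi_oppmp mcoef_oppmp. Qed.

Lemma iter_mpdiff_eqmp d f g : (forall k, f k =m g k) ->
  forall k, iter d mpdiff f k =m iter d mpdiff g k.
Proof.
move=> fg; elim: d => [|d IH] k s /=; first exact: fg.
by rewrite !mcoef_mpdiff !IH.
Qed.

Lemma iter_mpdiffS d f k : iter d mpdiff (fun k => f k.+1) k = iter d mpdiff f k.+1.
Proof. by elim: d k => [|d IH] k //=; rewrite /mpdiff !IH. Qed.

Lemma iter_mpdiff_Psi A B K d f k :
  iter d mpdiff (fun k => Psi A B K (f k)) k =m Psi A B K (iter d mpdiff f k).
Proof.
elim: d k => [|d IH] k s //=.
by rewrite Psi_mpdiff !mcoef_mpdiff !IH.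
Qed.

Lemma iter_mpdiff_Qik A B i k : iter i mpdiff (fun k => Qik A B i (k + i)) k =m [::].
Proof.
elim: i k => [|i IH] k s; first by rewrite /= addn0 Qik0.
have diffQ k' : mpdiff (fun k => Qik A B i.+1 (k + i.+1)) k' =m
                Psi A B i (Qik A B i (k'.+1 + i)).
  move=> s'; have ik : (i < k' + i.+1)%N by rewrite addnS ltnS leq_addl.
  rewrite mcoef_cat addSn (QikS A B ik) mcoef_cat mcoef_oppmp addrK.
  by rewrite (Psi_vars_lt A B (vars_lt_Qik A B (ltnW ik)) (ltnW ik)) addSn addnS.
rewrite iterSr (iter_mpdiff_eqmp _ diffQ) iter_mpdiff_Psi.
rewrite (iter_mpdiffS i (fun k => Qik A B i (k + i))).
by rewrite (Psi_eqmp _ _ _ (IH k.+1)) Psi_nil.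
Qed.

Lemma peval_cat e (P Q : mp) : peval e (P ++ Q) = peval e P + peval e Q.
Proof. exact: big_cat. Qed.

Lemma peval_oppmp e P : peval e (oppmp P) = - peval e P.
Proof. by rewrite /peval big_map -sumrN; apply: eq_bigr => t _; rewrite scalerN. Qed.

Lemma peval_iter_mpdiff e d f k :
  peval e (iter d mpdiff f k) = iter d fdiff (fun k => peval e (f k)) k.
Proof.
by elim: d k => [|d IH] k //=; rewrite /fdiff -!IH -peval_oppmp -peval_cat.
Qed.

Lemma mono_eval_widen (e : nat -> R) s N : (size s <= N)%N ->
  mono_eval e s = \prod_(j < N) e j ^+ nth 0%N s j.
Proof.
move=> sN; rewrite /mono_eval (big_ord_widen _ (fun j => e j ^+ nth 0%N s j) sN).
rewrite big_mkcond; apply: eq_bigr => j _; case: ltnP => // /(nth_default 0%N) ->.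
by rewrite expr0.
Qed.

Lemma mono_eval_mono_eq (e : nat -> R) s s' :
  mono_eq s s' -> mono_eval e s = mono_eval e s'.
Proof.
move=> /mono_eqP ss'.
rewrite (@mono_eval_widen e s (maxn (size s) (size s'))) ?leq_maxl //.
rewrite (@mono_eval_widen e s' (maxn (size s) (size s'))) ?leq_maxr //.
by apply: eq_bigr => j _; rewrite ss'.
Qed.

Lemma peval_eq0 e P : P =m [::] -> peval e P = 0.
Proof.
have [N] := ubnP (size P); elim: N P => // N IH [|t P] /ltnSE sizeP P0.
  exact: big_nil.
set rest := [seq t' <- t :: P | ~~ mono_eq t'.2 t.2].
have peval_split :
    peval e (t :: P) = mono_eval e t.2 *: mcoef (t :: P) t.2 + peval e rest.
  rewrite /peval (bigID (fun t' => mono_eq t'.2 t.2)) /= big_filter scaler_sumr.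
  by congr (_ + _); apply: eq_bigr => t' /mono_eval_mono_eq ->.
have rest0 : rest =m [::].
  move=> s; rewrite mcoef_nil /mcoef big_filter_cond.
  have [st|not_st] := boolP (mono_eq s t.2).
    rewrite big_pred0 // => t'; apply/negbTE; rewrite negb_and negbK.
    have [t's|] := boolP (mono_eq t'.2 s); last by rewrite orbT.
    by rewrite (mono_eq_trans t's st).
  transitivity (mcoef (t :: P) s); last by rewrite P0 mcoef_nil.
  apply: eq_bigl => t'.
  case: (boolP (mono_eq t'.2 s)) => [t's|]; rewrite ?andbF // andbT.
  by rewrite mono_eq_sym in t's; exact: contra (mono_eq_trans t's) not_st.
rewrite peval_split P0 mcoef_nil scaler0 add0r; apply: IH rest0.
by rewrite (leq_trans _ sizeP) // /rest /= mono_eq_refl /= ltnS size_filter count_size.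
Qed.

End FormalPolynomials.

Lemma mx11_eq0 (V : nmodType) (X : 'M[V]_1) : (X == 0) = (X ord0 ord0 == 0).
Proof.
apply/eqP/eqP => [->|X00]; first by rewrite mxE.
by apply/matrixP => a b; rewrite !ord1 X00 mxE.
Qed.

Theorem corollary3 (R : realType) (n : nat) (hn : (1 <= n)%N)
  (A B : 'M[R]_n) (C : 'M[R]_(1, n))
  (i m : nat) (hi : (1 <= i)%N) (v : 'rV[R]_i) (w0 : 'cV[R]_n) :
  (exists k0 : nat, (i <= k0)%N /\
     forall k : nat, (k0 <= k)%N ->
       C *m mxpow B m *m peval (env_of v) (Qik A B i k) *m w0 != 0)
  \/
  (forall k : nat, (i <= k)%N ->
       C *m mxpow B m *m peval (env_of v) (Qik A B i k) *m w0 = 0).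
Proof.
pose phi (X : 'M[R]_n) := (C *m mxpow B m *m X *m w0) ord0 ord0.
have phiB : {morph phi : X Y / X - Y} by move=> X Y; rewrite /phi mulmxBr mulmxBl !mxE.
pose g k := phi (peval (env_of v) (Qik A B i (k + i))).
have g_poly k : iter i fdiff g k = 0.
  rewrite -(iter_fdiff_morph phiB) -peval_iter_mpdiff.
  by rewrite (peval_eq0 _ (iter_mpdiff_Qik A B i k)) /phi mulmx0 mul0mx mxE.
have gE k : (i <= k)%N -> phi (peval (env_of v) (Qik A B i k)) = g (k - i)%N.
  by move=> ik; rewrite /g subnK.
have [g0|[K gK]] := iter_fdiff_eq0_dichotomy g_poly; [right|left].
  by move=> k /gE; rewrite g0 => /eqP; rewrite -mx11_eq0 => /eqP.
exists (K + i)%N; split=> [|k Kk]; first exact: leq_addl.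
have ik : (i <= k)%N := leq_trans (leq_addl _ _) Kk.
by rewrite mx11_eq0 -/(phi _) (gE _ ik) gK // leq_subRL // addnC.
Qed.
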